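(* For every nonzero $x\in J$ there exists $A\subset\mathbb N$ such that $\|x\|_A=\|x\|_J$. Hence there exists an $x$-norming partition.
   Context: For a real sequence $x=(x(n))_{n\in\mathbb N}$ let $\|x\|_J=\sup\bigl(\sum_{i=1}^n|\sum_{k\in I_i}x(k)|^2\bigr)^{1/2}$ over all $n$ and all families of pairwise disjoint intervals $I_1,\dots,I_n$ of $\mathbb N$ (intervals: nonempty sets of consecutive positive integers, possibly infinite). $J=\{x:\|x\|_J<\infty\}$; for $x\in J$ and any interval $I$ the series $\sum_{k\in I}x(k)$ converges. $\mathrm{supp}(x)=\{n:x(n)\ne0\}$. For $A\subset\mathbb N$, with $m_0=0$, $\mathcal P_A$ is the partition of $\mathbb N$: $\{\mathbb N\}$ if $A=\emptyset$; $\{(m_{i-1},m_i]\}_{i=1}^k\cup\{(m_k,\infty)\}$ if $A=\{m_1<\dots<m_k\}$; $\{(m_{i-1},m_i]\}_{i\in\mathbb N}$ if $A=\{m_1<m_2<\cdots\}$; and $\|x\|_A=(\sum_{I\in\mathcal P_A}|\sum_{k\in I}x(k)|^2)^{1/2}$. A family of intervals $\mathcal I=\{I_i\}_{i\in F}$: $F=\{1,\dots,k\}$ or $F=\mathbb N$, each $I_i$ an interval, $\max I_i<\min I_{i+1}$ whenever $i+1\in F$; $\|x\|_{\mathcal I}=(\sum_{i\in F}|\sum_{k\in I_i}x(k)|^2)^{1/2}$; it is $x$-norming if $\|x\|_{\mathcal I}=\|x\|_J$. For nonempty $L\subset\mathbb N$, $\sup L=\max L$ if finite and $\infty$ otherwise.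 An $x$-norming partition is an $x$-norming family with $\{\min I_i,\max I_i\}\subset\mathrm{supp}(x)$ for all $i<\sup F$, and, if $F$ is finite, $\min I_i\in\mathrm{supp}(x)$ and $\sup I_i=\sup\mathrm{supp}(x)$ for $i=\sup F$. *)

From Stdlib Require Import Reals Lra Lia List Classical ClassicalEpsilon ClassicalDescription.
From Coquelicot Require Import Coquelicot.
Import ListNotations.
Open Scope R_scope.

(* Indexing convention: the paper's N = {1,2,3,...} is represented by Rocq's
   nat = {0,1,2,...} via n |-> n-1.  A real sequence is x : nat -> R. *)

(* An interval of N: (a, Some b) = {a,...,b} (a <= b), (a, None) = {a, a+1, ...}. *)
Definition interval : Type := (nat * option nat)%type.

Definition interval_wf (I : interval) : Prop :=
  match snd I with Some b => (fst I <= b)%nat | None => True end.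

Definition in_interval (I : interval) (k : nat) : Prop :=
  (fst I <= k)%nat /\ match snd I with Some b => (k <= b)%nat | None => True end.

Definition isum (x : nat -> R) (I : interval) : R :=
  match snd I with
  | Some b => sum_n_m x (fst I) b
  | None => Series (fun n => x (fst I + n)%nat)
  end.

Definition disjoint_intervals (I1 I2 : interval) : Prop :=
  ~ (exists k, in_interval I1 k /\ in_interval I2 k).

Definition default_interval : interval := (0%nat, None).

Definition pairwise_disjoint (l : list interval) : Prop :=
  forall i j, (i < j)%nat -> (j < length l)%nat ->
    disjoint_intervals (nth i l default_interval) (nth j l default_interval).

Definition sqsum (x : nat -> R) (l : list interval) : R :=
  fold_right (fun I acc => (isum x I) ^ 2 + acc) 0 l.

Definition normJ (x : nat -> R) : Rbar :=
  Lub_Rbar (fun r => exists l : list interval,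
     l <> [] /\ List.Forall interval_wf l /\ pairwise_disjoint l /\ r = sqrt (sqsum x l)).

Definition inJ (x : nat -> R) : Prop := Rbar_lt (normJ x) p_infty.

Fixpoint prevA (A : nat -> bool) (m : nat) : option nat :=
  match m with
  | O => None
  | S m' => if A m' then Some m' else prevA A m'
  end.

(* first element of the block of P_A ending at m (for m in A), resp. of the tail
   block after all elements of A below m *)
Definition block_start (A : nat -> bool) (m : nat) : nat :=
  match prevA A m with None => 0%nat | Some p => S p end.

Definition blockA (x : nat -> R) (A : nat -> bool) (m : nat) : R :=
  sum_n_m x (block_start A m) m.

Definition finite_set (A : nat -> bool) : Prop :=
  exists t, forall n, (t <= n)%nat -> A n = false.

(* contribution of the unbounded block (m_k, infinity) when A is finite
   (the whole of N when A is empty); 0 when A is infinite *)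
Definition tail_term (x : nat -> R) (A : nat -> bool) : R :=
  match excluded_middle_informative (finite_set A) with
  | left H =>
      let t := proj1_sig (constructive_indefinite_description _ H) in
      (Series (fun n => x (block_start A t + n)%nat)) ^ 2
  | right _ => 0
  end.

Definition normA (x : nat -> R) (A : nat -> bool) : R :=
  sqrt (Series (fun m => if A m then (blockA x A m) ^ 2 else 0) + tail_term x A).

(* F = {1,...,k} (a nonempty list) or F = N (a sequence) *)
Inductive ifamily : Type :=
| FinF : list interval -> ifamily
| InfF : (nat -> interval) -> ifamily.

Definition ordered_pair (I J : interval) : Prop :=
  match snd I with Some b => (b < fst J)%nat | None => False end.

Definition family_ok (F : ifamily) : Prop :=
  match F with
  | FinF l => l <> [] /\ List.Forall interval_wf l /\
      (forall i, (S i < length l)%nat ->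
         ordered_pair (nth i l default_interval) (nth (S i) l default_interval))
  | InfF f => (forall i, interval_wf (f i)) /\ (forall i, ordered_pair (f i) (f (S i)))
  end.

Definition family_norm (x : nat -> R) (F : ifamily) : R :=
  match F with
  | FinF l => sqrt (sqsum x l)
  | InfF f => sqrt (Series (fun i => (isum x (f i)) ^ 2))
  end.

Definition x_norming (x : nat -> R) (F : ifamily) : Prop :=
  family_ok F /\ Finite (family_norm x F) = normJ x.

Definition inner_cond (x : nat -> R) (I : interval) : Prop :=
  x (fst I) <> 0 /\ match snd I with Some b => x b <> 0 | None => False end.

(* min I in supp(x) and sup I = sup supp(x) *)
Definition last_cond (x : nat -> R) (I : interval) : Prop :=
  x (fst I) <> 0 /\
  match snd I with
  | None => forall N, exists n, (N <= n)%nat /\ x n <> 0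
  | Some m => x m <> 0 /\ forall n, x n <> 0 -> (n <= m)%nat
  end.

Definition x_norming_partition (x : nat -> R) (F : ifamily) : Prop :=
  x_norming x F /\
  match F with
  | FinF l => (forall i, (S i < length l)%nat -> inner_cond x (nth i l default_interval))
              /\ last_cond x (nth (length l - 1) l default_interval)
  | InfF f => forall i, inner_cond x (f i)
  end.

From Stdlib Require Import Reals Lra Lia List Permutation.
From Stdlib Require Import Classical ClassicalEpsilon ClassicalDescription.
From Coquelicot Require Import Coquelicot.
Import ListNotations.
Open Scope R_scope.

(* Write [S n = x 0 + ... + x (n - 1)], so that the sum of [x] over [[a, b)] is [S b - S a].
   Since [x] is in [J], [S] is Cauchy (otherwise infinitely many disjoint blocks with large sums
   could be collected) and converges to some [L]; sorting the intervals of a family and cutting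
   at their endpoints shows that [||x||_J ^ 2] is the supremum, over cut lists
   [0 < c_1 < ... < c_k], of [sum_i (S c_(i+1) - S c_i) ^ 2 + (L - S c_k) ^ 2].
   The blocks beyond a late cut contribute little, so this value depends continuously on the
   set of cuts viewed as a point of the Cantor space [nat -> bool]. A cluster point [A] of cut
   sets with values tending to the supremum, which exists by compactness (König's lemma),
   therefore attains it: [||x||_A = ||x||_J]. Shrinking each block of [P_A] to the hull of the
   support of [x] inside it and discarding the blocks where [x] vanishes keeps every block sum
   and gives an x-norming partition. *)

(** * Partial sums *)

Fixpoint psum (x : nat -> R) (n : nat) : R :=
  match n with O => 0 | S m => psum x m + x m end.

Lemma sum_n_psum x n : sum_n x n = psum x (S n).
Proof.
  induction n as [|n IH]; simpl.
  - rewrite sum_O. lra.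
  - rewrite sum_Sn, IH. simpl. unfold plus; simpl. lra.
Qed.

Lemma sum_n_m_psum x a b : (a <= b)%nat -> sum_n_m x a b = psum x (S b) - psum x a.
Proof.
  induction b as [|b IH]; intros Hab.
  - replace a with 0%nat by lia. rewrite sum_n_n. simpl. lra.
  - destruct (Nat.eq_dec a (S b)) as [->|Hne].
    + rewrite sum_n_n. simpl. lra.
    + rewrite sum_n_Sm, IH by lia. unfold plus; simpl. lra.
Qed.

Lemma psum_ext y z k : (forall n, y n = z n) -> psum y k = psum z k.
Proof. intros Hyz. induction k as [|k IH]; simpl; [reflexivity|]. now rewrite IH, Hyz. Qed.

Lemma psum_const_on y a b : (a <= b)%nat -> (forall n, (a <= n < b)%nat -> y n = 0) ->
  psum y b = psum y a.
Proof.
  intros Hab Hy. induction Hab as [|b Hab IH]; [reflexivity|].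
  simpl. rewrite (Hy b) by lia. rewrite IH; [lra|]. intros n Hn. apply Hy. lia.
Qed.

Lemma psum_le_psum y j k : (forall n, 0 <= y n) -> (j <= k)%nat -> psum y j <= psum y k.
Proof.
  intros Hy Hjk. induction Hjk as [|k _ IH]; simpl; [lra|]. specialize (Hy k). lra.
Qed.

Lemma lim_eventually_const (u : nat -> R) (L c : R) N :
  is_lim_seq u L -> (forall n, (N <= n)%nat -> u n = c) -> L = c.
Proof.
  intros HL Hc.
  assert (Hc' : is_lim_seq u c).
  { apply is_lim_seq_ext_loc with (u := fun _ => c); [|apply is_lim_seq_const].
    exists N. intros n Hn. now rewrite Hc. }
  apply is_lim_seq_unique in HL, Hc'. rewrite HL in Hc'. now injection Hc'.
Qed.

Lemma lim_sq_dist_small (u : nat -> R) (l : R) eps : is_lim_seq u l -> 0 < eps ->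
  exists k, forall n, (k <= n)%nat -> (l - u n) ^ 2 <= eps.
Proof.
  intros Hl Heps. set (e := Rmin 1 eps).
  assert (He : 0 < e) by (apply Rmin_glb_lt; lra).
  assert (He1 : e <= 1) by apply Rmin_l. assert (He2 : e <= eps) by apply Rmin_r.
  apply is_lim_seq_spec in Hl. destruct (Hl (mkposreal e He)) as [k Hk]. simpl in Hk.
  exists k. intros n Hn. specialize (Hk n Hn). apply Rabs_def2 in Hk. nra.
Qed.

Lemma Series_psum_lim y (s : R) : is_lim_seq (psum y) s -> Series y = s.
Proof.
  intros Hs. unfold Series. rewrite (Lim_seq_ext _ (fun n => psum y (S n))) by apply sum_n_psum.
  now rewrite Lim_seq_incr_1, (is_lim_seq_unique _ _ Hs).
Qed.

Lemma Series_eventually_zero y t : (forall n, (t <= n)%nat -> y n = 0) -> Series y = psum y t.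
Proof.
  intros Hy. apply Series_psum_lim.
  apply is_lim_seq_ext_loc with (u := fun _ => psum y t); [|apply is_lim_seq_const].
  exists t. intros n Hn. symmetry. apply psum_const_on; [exact Hn|]. intros k Hk. apply Hy. lia.
Qed.

Lemma Series_shift_lim x (L : R) a : is_lim_seq (psum x) L ->
  Series (fun n => x (a + n)%nat) = L - psum x a.
Proof.
  intros HL. apply Series_psum_lim.
  apply is_lim_seq_ext with (u := fun m => psum x (m + a) - psum x a).
  - induction n as [|m IH]; simpl; [lra|]. rewrite <- IH, Nat.add_comm. lra.
  - apply is_lim_seq_minus'; [|apply is_lim_seq_const]. now apply is_lim_seq_incr_n.
Qed.

Lemma is_lim_seq_psum_Series y M : (forall n, 0 <= y n) -> (forall n, psum y n <= M) ->
  is_lim_seq (psum y) (Series y).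
Proof.
  intros Hy HM. destruct (ex_finite_lim_seq_incr (psum y) M) as [s Hs].
  - intros n. simpl. specialize (Hy n). lra.
  - exact HM.
  - now rewrite (Series_psum_lim y s Hs).
Qed.

Lemma psum_le_lim y (s : R) j : (forall n, 0 <= y n) -> is_lim_seq (psum y) s -> psum y j <= s.
Proof.
  intros Hy Hs.
  apply (is_lim_seq_le (fun _ => psum y j) (fun n => psum y (n + j)) (psum y j) s).
  - intros n. apply psum_le_psum; [exact Hy|lia].
  - apply is_lim_seq_const.
  - now apply (is_lim_seq_incr_n (psum y) j s).
Qed.

Lemma psum_enumeration y (e : nat -> nat) : (forall i, (e i < e (S i))%nat) ->
  (forall j, (j < e 0%nat)%nat -> y j = 0) -> (forall i j, (e i < j < e (S i))%nat -> y j = 0) ->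
  forall i, psum y (S (e i)) = psum (fun i => y (e i)) (S i).
Proof.
  intros He H0 HS. induction i as [|i IH].
  - change (psum y (e 0%nat) + y (e 0%nat) = 0 + y (e 0%nat)).
    rewrite (psum_const_on y 0 (e 0%nat)); [simpl; lra|lia|]. intros j Hj. apply H0. lia.
  - change (psum y (e (S i)) + y (e (S i)) = psum (fun i => y (e i)) (S i) + y (e (S i))).
    rewrite <- IH, (psum_const_on y (S (e i)) (e (S i))); [reflexivity|apply He|].
    intros j Hj. apply (HS i). lia.
Qed.

Lemma least_witness (P : nat -> Prop) n : P n -> exists k, P k /\ forall j, (j < k)%nat -> ~ P j.
Proof.
  induction n as [n IH] using (well_founded_induction Wf_nat.lt_wf). intros Hn.
  destruct (classic (exists j, (j < n)%nat /\ P j)) as [[j [Hj HPj]]|Hno].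
  - exact (IH j Hj HPj).
  - exists n. split; [exact Hn|]. intros j Hj HPj. apply Hno. eauto.
Qed.

Lemma greatest_witness (P : nat -> Prop) n b : P n -> (n <= b)%nat ->
  exists k, (n <= k <= b)%nat /\ P k /\ forall j, (k < j <= b)%nat -> ~ P j.
Proof.
  intros Hn Hnb.
  destruct (least_witness (fun d => (d <= b - n)%nat /\ P (b - d)%nat) (b - n)%nat)
    as [d [[Hd HPd] Hmin]].
  { split; [lia|]. now replace (b - (b - n))%nat with n by lia. }
  exists (b - d)%nat. split; [lia|]. split; [exact HPd|].
  intros j Hj HPj. apply (Hmin (b - j)%nat); [lia|].
  split; [lia|]. now replace (b - (b - j))%nat with j by lia.
Qed.

Lemma enumerate_infinite (P : nat -> Prop) : (forall t, exists m, (t <= m)%nat /\ P m) ->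
  exists e : nat -> nat, (forall i, P (e i)) /\ (forall i, (e i < e (S i))%nat) /\
    (forall j, (j < e 0%nat)%nat -> ~ P j) /\ (forall i j, (e i < j < e (S i))%nat -> ~ P j).
Proof.
  intros Hinf.
  assert (Hnext : forall t, exists m, (t <= m)%nat /\ P m /\ forall j, (t <= j < m)%nat -> ~ P j).
  { intros t. destruct (Hinf t) as [m0 Hm0].
    destruct (least_witness (fun m => (t <= m)%nat /\ P m) m0 Hm0) as [m [[Htm HPm] Hmin]].
    exists m. split; [exact Htm|]. split; [exact HPm|].
    intros j Hj HPj. apply (Hmin j); [lia|split; [lia|exact HPj]]. }
  destruct (ClassicalEpsilon.choice _ Hnext) as [next Hspec].
  set (e := fix e i := match i with O => next 0%nat | S i' => next (S (e i')) end).
  assert (He0 : e 0%nat = next 0%nat) by reflexivity.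
  assert (HeS : forall i, e (S i) = next (S (e i))) by reflexivity.
  exists e. split; [|split; [|split]].
  - intros [|i]; [rewrite He0|rewrite HeS]; apply Hspec.
  - intros i. rewrite HeS. destruct (Hspec (S (e i))) as [Hle _]. exact Hle.
  - intros j Hj. rewrite He0 in Hj. destruct (Hspec 0%nat) as [_ [_ Hgap]]. apply Hgap. lia.
  - intros i j Hj. rewrite HeS in Hj. destruct (Hspec (S (e i))) as [_ [_ Hgap]]. apply Hgap. lia.
Qed.

(** * Cut lists and ordered families of intervals *)

Fixpoint last_cut (a : nat) (cs : list nat) : nat :=
  match cs with [] => a | b :: r => last_cut b r end.

Fixpoint increasing_from (a : nat) (cs : list nat) : Prop :=
  match cs with [] => True | b :: r => (a < b)%nat /\ increasing_from b r end.

Fixpoint cut_sqsum (x : nat -> R) (a : nat) (cs : list nat) : R :=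
  match cs with [] => 0 | b :: r => (psum x b - psum x a) ^ 2 + cut_sqsum x b r end.

Definition cut_sqsum_tail (x : nat -> R) (L : R) (a : nat) (cs : list nat) : R :=
  cut_sqsum x a cs + (L - psum x (last_cut a cs)) ^ 2.

Lemma last_cut_app a c1 c2 : last_cut a (c1 ++ c2) = last_cut (last_cut a c1) c2.
Proof. revert a; induction c1; intros; simpl; auto. Qed.

Lemma increasing_from_app a c1 c2 :
  increasing_from a (c1 ++ c2) <-> increasing_from a c1 /\ increasing_from (last_cut a c1) c2.
Proof. revert a; induction c1 as [|b c1 IH]; intros; simpl; [tauto|]. rewrite IH. tauto. Qed.

Lemma last_cut_ge a cs : increasing_from a cs -> (a <= last_cut a cs)%nat.
Proof.
  revert a; induction cs as [|b r IH]; simpl; [lia|]. intros a [Hab Hr]. specialize (IH b Hr). lia.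
Qed.

Lemma increasing_from_In a cs p : increasing_from a cs -> In p cs -> (a < p <= last_cut a cs)%nat.
Proof.
  revert a; induction cs as [|b r IH]; intros a Hi Hin; simpl in *; [tauto|].
  destruct Hi as [Hab Hr]. destruct Hin as [<-|Hin].
  - pose proof (last_cut_ge _ _ Hr). lia.
  - specialize (IH _ Hr Hin). lia.
Qed.

Lemma cut_sqsum_app x a c1 c2 :
  cut_sqsum x a (c1 ++ c2) = cut_sqsum x a c1 + cut_sqsum x (last_cut a c1) c2.
Proof. revert a; induction c1 as [|b c1 IH]; intros; simpl; [lra|]. rewrite IH. lra. Qed.

Lemma cut_sqsum_tail_app x L a c1 c2 :
  cut_sqsum_tail x L a (c1 ++ c2) = cut_sqsum x a c1 + cut_sqsum_tail x L (last_cut a c1) c2.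
Proof. unfold cut_sqsum_tail. rewrite cut_sqsum_app, last_cut_app. lra. Qed.

Lemma cut_sqsum_ge0 x a cs : 0 <= cut_sqsum x a cs.
Proof.
  revert a; induction cs as [|b r IH]; intros; simpl; [lra|].
  specialize (IH b). pose proof (pow2_ge_0 (psum x b - psum x a)). lra.
Qed.

Lemma sqsum_ge0 x l : 0 <= sqsum x l.
Proof. induction l as [|I l IH]; simpl; [lra|]. pose proof (pow2_ge_0 (isum x I)). lra. Qed.

Lemma sqsum_app x l1 l2 : sqsum x (l1 ++ l2) = sqsum x l1 + sqsum x l2.
Proof. induction l1 as [|I l1 IH]; simpl; [lra|]. rewrite IH. lra. Qed.

Lemma sqsum_Permutation x l1 l2 : Permutation l1 l2 -> sqsum x l1 = sqsum x l2.
Proof. induction 1; simpl; lra. Qed.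

Lemma sqsum_cons x I l : sqsum x (I :: l) = isum x I ^ 2 + sqsum x l.
Proof. reflexivity. Qed.

Lemma isum_closed x a b : (a <= b)%nat -> isum x (a, Some b) = psum x (S b) - psum x a.
Proof. intros Hab. exact (sum_n_m_psum x a b Hab). Qed.

Lemma isum_ray x (L : R) a : is_lim_seq (psum x) L -> isum x (a, None) = L - psum x a.
Proof. intros HL. exact (Series_shift_lim x L a HL). Qed.

Fixpoint chain (l : list interval) : Prop :=
  match l with
  | [] => True
  | J :: r => interval_wf J /\ List.Forall (ordered_pair J) r /\ chain r
  end.

Lemma ordered_pair_trans I J K : ordered_pair I J -> interval_wf J -> ordered_pair J K ->
  ordered_pair I K.
Proof.
  destruct I as [a [b|]], J as [c [d|]]; unfold ordered_pair, interval_wf; simpl; lia || tauto.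
Qed.

Lemma ordered_pair_disjoint I J : ordered_pair I J -> disjoint_intervals I J.
Proof.
  destruct I as [a [b|]]; unfold ordered_pair; simpl; [|tauto].
  intros Hb [k [[_ Hk] [HJ _]]]. simpl in Hk. lia.
Qed.

Lemma chain_nth l i j : chain l -> (i < j < length l)%nat ->
  ordered_pair (nth i l default_interval) (nth j l default_interval).
Proof.
  revert i j; induction l as [|I r IH]; intros i j Hc Hij; simpl in *; [lia|].
  destruct Hc as [_ [Hr Hc]]. destruct i as [|i], j as [|j]; try lia.
  - rewrite Forall_forall in Hr. apply Hr, nth_In. lia.
  - apply IH; auto. lia.
Qed.

Lemma chain_wf l : chain l -> List.Forall interval_wf l.
Proof. induction l as [|I r IH]; simpl; intros; [constructor|]. constructor; tauto. Qed.

Lemma chain_pairwise_disjoint l : chain l -> pairwise_disjoint l.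
Proof. intros Hc i j Hij Hj. apply ordered_pair_disjoint, chain_nth; auto. Qed.

Lemma chain_app_last l J : chain l -> interval_wf J -> List.Forall (fun I => ordered_pair I J) l ->
  chain (l ++ [J]).
Proof.
  induction l as [|I r IH]; simpl; intros Hc HJ HIJ; [now repeat split|].
  destruct Hc as [HI [Hr Hc]]. inversion HIJ as [|? ? HIJ0 HrJ]; subst.
  split; [exact HI|]. split; [|now apply IH].
  apply Forall_app. split; [exact Hr|]. now constructor.
Qed.

Fixpoint cut_family (a : nat) (cs : list nat) : list interval :=
  match cs with [] => [] | b :: r => (a, Some (pred b)) :: cut_family b r end.

Lemma sqsum_cut_family x a cs : increasing_from a cs ->
  sqsum x (cut_family a cs) = cut_sqsum x a cs.
Proof.
  revert a; induction cs as [|b r IH]; intros a Hi; [reflexivity|]. destruct Hi as [Hab Hr].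
  cbn [cut_family cut_sqsum]. rewrite sqsum_cons, IH, isum_closed by (assumption || lia).
  now replace (S (pred b)) with b by lia.
Qed.

Lemma chain_cut_family_ray a cs : increasing_from a cs ->
  chain (cut_family a cs ++ [(last_cut a cs, None)]) /\
  List.Forall (fun I => (a <= fst I)%nat) (cut_family a cs ++ [(last_cut a cs, None)]).
Proof.
  revert a; induction cs as [|b r IH]; intros a Hi; simpl.
  - split; [now repeat split|]. constructor; [simpl; lia|constructor].
  - destruct Hi as [Hab Hr]. destruct (IH b Hr) as [Hc Hge]. split.
    + split; [unfold interval_wf; simpl; lia|]. split; [|exact Hc].
      eapply Forall_impl; [|exact Hge]. intros I HI. simpl in HI.
      unfold ordered_pair. simpl. destruct b; simpl; lia.
    + constructor; [simpl; lia|]. eapply Forall_impl; [|exact Hge]. intros I HI. simpl in HI. lia.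
Qed.

(** * The norm of J as a supremum over cut lists *)

Definition admissible (l : list interval) : Prop :=
  l <> [] /\ List.Forall interval_wf l /\ pairwise_disjoint l.

Lemma chain_admissible l : l <> [] -> chain l -> admissible l.
Proof.
  intros Hl Hc. split; [exact Hl|]. split; [now apply chain_wf|now apply chain_pairwise_disjoint].
Qed.

Lemma admissible_cut_family_ray a cs : increasing_from a cs ->
  admissible (cut_family a cs ++ [(last_cut a cs, None)]).
Proof.
  intros Hi. apply chain_admissible; [apply not_eq_sym, app_cons_not_nil|].
  exact (proj1 (chain_cut_family_ray a cs Hi)).
Qed.

Lemma admissible_ray a : admissible [(a, None)].
Proof. apply chain_admissible; [congruence|]. now repeat split. Qed.

Lemma normJ_spec x : inJ x -> exists NJ, normJ x = Finite NJ /\ 0 <= NJ /\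
  (forall l, admissible l -> sqsum x l <= NJ ^ 2) /\
  (forall eps, 0 < eps -> exists l, admissible l /\ NJ ^ 2 - eps <= sqsum x l).
Proof.
  unfold inJ, normJ. set (E := fun r => exists l : list interval, _). intros HJ.
  destruct (Lub_Rbar_correct E) as [Hub Hlub].
  assert (HE : forall l, admissible l -> E (sqrt (sqsum x l))).
  { intros l [H1 [H2 H3]]. exists l. auto. }
  assert (Hsq : forall l, 0 <= sqrt (sqsum x l) /\ sqrt (sqsum x l) ^ 2 = sqsum x l).
  { intros l. split; [apply sqrt_pos|]. simpl. rewrite Rmult_1_r. apply sqrt_sqrt, sqsum_ge0. }
  destruct (Lub_Rbar E) as [NJ| |]; [|contradiction|destruct (Hub _ (HE _ (admissible_ray 0)))].
  assert (Hub_l : forall l, admissible l -> sqrt (sqsum x l) <= NJ)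
    by (intros l Hl; exact (Hub _ (HE l Hl))).
  assert (Hbound : forall l, admissible l -> sqsum x l <= NJ ^ 2).
  { intros l Hl. destruct (Hsq l) as [Hpos <-]. pose proof (Hub_l l Hl). nra. }
  assert (HNJ : 0 <= NJ).
  { destruct (Hsq [(0%nat, None)]) as [Hs0 _]. pose proof (Hub_l _ (admissible_ray 0)). lra. }
  exists NJ. repeat split; [exact HNJ|exact Hbound|].
  intros eps Heps. apply NNPP. intros Hno.
  assert (Hlt : forall l, admissible l -> sqsum x l < NJ ^ 2 - eps).
  { intros l Hl. apply Rnot_le_lt. intros Hle. apply Hno. eauto. }
  pose proof (Hlt _ (admissible_ray 0)) as Hpos. pose proof (sqsum_ge0 x [(0%nat, None)]).
  assert (Hub' : is_ub_Rbar E (sqrt (NJ ^ 2 - eps))).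
  { intros r [l [H1 [H2 [H3 ->]]]]. simpl. apply sqrt_le_1_alt, Rlt_le, Hlt. now repeat split. }
  specialize (Hlub _ Hub'). change (NJ <= sqrt (NJ ^ 2 - eps)) in Hlub.
  pose proof (sqrt_sqrt (NJ ^ 2 - eps) ltac:(lra)). pose proof (sqrt_pos (NJ ^ 2 - eps)). nra.
Qed.


Lemma disjoint_ordered I J : interval_wf I -> interval_wf J -> disjoint_intervals I J ->
  ordered_pair I J \/ ordered_pair J I.
Proof.
  destruct I as [a b], J as [c d]. unfold interval_wf, ordered_pair. simpl. intros HI HJ Hd.
  destruct (Nat.le_gt_cases a c) as [Hac|Hca]; [left; destruct b as [b|]|right; destruct d as [d|]];
    try (apply Nat.nlt_ge; intros Hlt); apply Hd.
  - exists c. unfold in_interval. simpl. split; [lia|]. destruct d; lia.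
  - exists c. unfold in_interval. simpl. destruct d; lia.
  - exists a. unfold in_interval. simpl. destruct b; lia.
  - exists a. unfold in_interval. simpl. destruct b; lia.
Qed.

Lemma pairwise_disjoint_cons I l : pairwise_disjoint (I :: l) ->
  pairwise_disjoint l /\ forall J, In J l -> disjoint_intervals I J.
Proof.
  intros Hd. split.
  - intros i j Hij Hj. apply (Hd (S i) (S j)); simpl; lia.
  - intros J HJ. destruct (In_nth l J default_interval HJ) as [j [Hj <-]].
    apply (Hd 0%nat (S j)); simpl; lia.
Qed.

Lemma chain_insert I l : interval_wf I -> chain l ->
  (forall J, In J l -> ordered_pair I J \/ ordered_pair J I) ->
  exists l', Permutation (I :: l) l' /\ chain l'.
Proof.
  revert I; induction l as [|J r IH]; intros I HI Hc Hcmp.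
  - exists [I]. split; [reflexivity|]. now repeat split.
  - destruct Hc as [HJ [HJr Hr]]. destruct (Hcmp J (or_introl eq_refl)) as [HIJ|HJI].
    + exists (I :: J :: r). split; [reflexivity|]. split; [exact HI|]. split; [|now split].
      constructor; [exact HIJ|]. eapply Forall_impl; [|exact HJr].
      intros K HK. eapply ordered_pair_trans; eauto.
    + destruct (IH I HI Hr (fun K HK => Hcmp K (or_intror HK))) as [r' [Hp Hr']].
      exists (J :: r'). split; [rewrite <- Hp; apply perm_swap|].
      split; [exact HJ|]. split; [|exact Hr'].
      apply Forall_forall. intros K HK. apply (Permutation_in _ (Permutation_sym Hp)) in HK.
      destruct HK as [<-|HK]; [exact HJI|]. now apply (proj1 (Forall_forall _ _) HJr).
Qed.

Lemma admissible_sort l : List.Forall interval_wf l -> pairwise_disjoint l ->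
  exists l', Permutation l l' /\ chain l'.
Proof.
  induction l as [|I r IH]; intros Hw Hd.
  - exists []. split; [reflexivity|exact I].
  - inversion Hw as [|? ? HI Hr]; subst. destruct (pairwise_disjoint_cons I r Hd) as [Hdr HIr].
    destruct (IH Hr Hdr) as [r' [Hp Hc]].
    destruct (chain_insert I r' HI Hc) as [l' [Hp' Hc']].
    + intros J HJ. apply (Permutation_in _ (Permutation_sym Hp)) in HJ.
      apply disjoint_ordered; auto. now apply (proj1 (Forall_forall _ _) Hr).
    + exists l'. split; [|exact Hc']. now rewrite Hp.
Qed.

Lemma cuts_extend_below x (L : R) a p cs : (a <= p)%nat -> increasing_from p cs ->
  exists cs', increasing_from a cs' /\ cut_sqsum_tail x L p cs <= cut_sqsum_tail x L a cs'.
Proof.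
  intros Hap Hi. destruct (Nat.eq_dec a p) as [->|Hne]; [exists cs; split; [exact Hi|lra]|].
  exists (p :: cs). split; [split; [lia|exact Hi]|].
  unfold cut_sqsum_tail. simpl. pose proof (pow2_ge_0 (psum x p - psum x a)). lra.
Qed.

Lemma chain_cuts x (L : R) l a : is_lim_seq (psum x) L -> chain l ->
  List.Forall (fun I => (a <= fst I)%nat) l ->
  exists cs, increasing_from a cs /\ sqsum x l <= cut_sqsum_tail x L a cs.
Proof.
  intros HL. revert a; induction l as [|[p q] r IH]; intros a Hc Ha.
  - exists []. split; [exact I|]. unfold cut_sqsum_tail. simpl.
    pose proof (pow2_ge_0 (L - psum x a)). lra.
  - destruct Hc as [Hw [Hr Hc]]. inversion Ha as [|? ? Hap _]; subst. simpl in Hap.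
    assert (Hfirst : exists cs, increasing_from p cs /\
              sqsum x ((p, q) :: r) <= cut_sqsum_tail x L p cs).
    { destruct q as [q|].
      - destruct (IH (S q) Hc) as [cs [Hi Hle]].
        { eapply Forall_impl; [|exact Hr]. unfold ordered_pair. simpl. intros J HJ. lia. }
        exists (S q :: cs). unfold interval_wf in Hw. simpl in Hw. split; [split; [lia|exact Hi]|].
        unfold cut_sqsum_tail in *. rewrite sqsum_cons, isum_closed by lia. simpl. lra.
      - destruct r as [|J r]; [|inversion Hr as [|? ? HJ _]; contradiction].
        exists []. split; [exact I|]. unfold cut_sqsum_tail.
        rewrite sqsum_cons, (isum_ray x L) by exact HL. simpl. lra. }
    destruct Hfirst as [cs [Hi Hle]].
    destruct (cuts_extend_below x L a p cs Hap Hi) as [cs' [Hi' Hle']].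
    exists cs'. split; [exact Hi'|exact (Rle_trans _ _ _ Hle Hle')].
Qed.

Lemma admissible_cuts x (L : R) l : is_lim_seq (psum x) L -> admissible l ->
  exists cs, increasing_from 0 cs /\ sqsum x l <= cut_sqsum_tail x L 0 cs.
Proof.
  intros HL [_ [Hw Hd]]. destruct (admissible_sort l Hw Hd) as [l' [Hp Hc]].
  rewrite (sqsum_Permutation x l l' Hp). apply chain_cuts; [exact HL|exact Hc|].
  apply Forall_forall. intros. lia.
Qed.

(** * Cut sets and the norm [||x||_A] *)

(* [A m] puts a cut between [m] and [m + 1]: the cut point is [S m]. *)
Fixpoint cuts_of (A : nat -> bool) (j : nat) : list nat :=
  match j with O => [] | S j' => cuts_of A j' ++ (if A j' then [S j'] else []) end.

Lemma cuts_of_extend A k j : (k <= j)%nat ->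
  exists cs, cuts_of A j = cuts_of A k ++ cs /\ increasing_from k cs /\ (last_cut k cs <= j)%nat.
Proof.
  induction 1 as [|j Hkj [cs [Hj [Hi Hl]]]].
  - exists []. rewrite app_nil_r. repeat split. simpl. lia.
  - exists (cs ++ (if A j then [S j] else [])). simpl. rewrite Hj, app_assoc. split; [reflexivity|].
    rewrite increasing_from_app, last_cut_app. destruct (A j); simpl; repeat split; auto; lia.
Qed.

Lemma increasing_cuts_of A j :
  increasing_from 0 (cuts_of A j) /\ (last_cut 0 (cuts_of A j) <= j)%nat.
Proof. destruct (cuts_of_extend A 0 j ltac:(lia)) as [cs [-> [Hi Hl]]]. now split. Qed.

Lemma cuts_of_ext A B j : (forall i, (i < j)%nat -> A i = B i) -> cuts_of A j = cuts_of B j.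
Proof.
  induction j as [|j IH]; intros H; simpl; [reflexivity|].
  rewrite (H j) by lia. rewrite IH; [reflexivity|]. intros i Hi. apply H. lia.
Qed.

Lemma cuts_of_stable A t j : (forall n, (t <= n)%nat -> A n = false) -> (t <= j)%nat ->
  cuts_of A j = cuts_of A t.
Proof.
  intros HA. induction 1 as [|j Htj IH]; [reflexivity|].
  simpl. rewrite IH, HA by lia. apply app_nil_r.
Qed.

Lemma block_start_S A m : block_start A (S m) = if A m then S m else block_start A m.
Proof. unfold block_start. simpl. now destruct (A m). Qed.

Lemma block_start_last_cut A m : block_start A m = last_cut 0 (cuts_of A m).
Proof.
  induction m as [|m IH]; [reflexivity|]. rewrite block_start_S. simpl.
  rewrite last_cut_app. now destruct (A m).
Qed.

Lemma block_start_le A m : (block_start A m <= m)%nat.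
Proof. rewrite block_start_last_cut. apply increasing_cuts_of. Qed.

Lemma block_start_after_cut A p m : A p = true -> (p < m)%nat -> (S p <= block_start A m)%nat.
Proof.
  intros Hp. induction 1 as [|m Hpm IH]; rewrite block_start_S; [now rewrite Hp|].
  destruct (A m); lia.
Qed.

Lemma block_start_no_cut A n d : (forall p, (n <= p < n + d)%nat -> A p = false) ->
  (block_start A (n + d) <= n)%nat.
Proof.
  induction d as [|d IH]; intros HA; [rewrite Nat.add_0_r; apply block_start_le|].
  rewrite Nat.add_succ_r, block_start_S, HA by lia. apply IH. intros p Hp. apply HA. lia.
Qed.

Definition block_term (x : nat -> R) (A : nat -> bool) (m : nat) : R :=
  if A m then blockA x A m ^ 2 else 0.

Lemma block_term_ge0 x A m : 0 <= block_term x A m.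
Proof. unfold block_term. destruct (A m); [apply pow2_ge_0|lra]. Qed.

Lemma blockA_psum x A m : blockA x A m = psum x (S m) - psum x (block_start A m).
Proof. apply sum_n_m_psum, block_start_le. Qed.

Lemma psum_block_term x A j : psum (block_term x A) j = cut_sqsum x 0 (cuts_of A j).
Proof.
  induction j as [|j IH]; [reflexivity|]. simpl. rewrite IH, cut_sqsum_app.
  unfold block_term. rewrite blockA_psum, block_start_last_cut. destruct (A j); simpl; lra.
Qed.

Lemma cut_sqsum_tail_cuts_of x L A j : cut_sqsum_tail x L 0 (cuts_of A j) =
  psum (block_term x A) j + (L - psum x (block_start A j)) ^ 2.
Proof. unfold cut_sqsum_tail. now rewrite psum_block_term, block_start_last_cut. Qed.

Definition cut_set (cs : list nat) (m : nat) : bool :=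
  if in_dec Nat.eq_dec (S m) cs then true else false.

Lemma cuts_of_cut_set cs k : increasing_from 0 cs ->
  exists cs2, cs = cuts_of (cut_set cs) k ++ cs2 /\ increasing_from k cs2.
Proof.
  intros Hcs. induction k as [|k [cs2 [Hk Hi]]]; [now exists cs|]. simpl. unfold cut_set at 2.
  destruct (in_dec Nat.eq_dec (S k) cs) as [Hin|Hout].
  - assert (Hin2 : In (S k) cs2).
    { rewrite Hk in Hin. apply in_app_iff in Hin. destruct Hin as [Hin|Hin]; [|exact Hin].
      destruct (increasing_cuts_of (cut_set cs) k) as [Hi0 Hl0].
      pose proof (increasing_from_In _ _ _ Hi0 Hin). lia. }
    destruct cs2 as [|b r]; [destruct Hin2|]. destruct Hi as [Hkb Hr].
    destruct Hin2 as [<-|Hin2]; [|pose proof (increasing_from_In _ _ _ Hr Hin2); lia].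
    exists r. split; [|exact Hr]. rewrite <- app_assoc. exact Hk.
  - exists cs2. rewrite app_nil_r. split; [exact Hk|].
    destruct cs2 as [|b r]; [exact I|]. destruct Hi as [Hkb Hr]. split; [|exact Hr].
    assert (b <> S k) by (intros ->; apply Hout; rewrite Hk; apply in_app_iff; right; now left).
    lia.
Qed.

Lemma infinite_cuts A : ~ finite_set A -> forall t, exists n, (t <= n)%nat /\ A n = true.
Proof.
  intros Hinf t. apply NNPP. intros Hno. apply Hinf. exists t. intros n Hn.
  destruct (A n) eqn:E; [|reflexivity]. exfalso. apply Hno. eauto.
Qed.

Lemma normA_finite x (L : R) A t : is_lim_seq (psum x) L ->
  (forall n, (t <= n)%nat -> A n = false) ->
  normA x A = sqrt (cut_sqsum_tail x L 0 (cuts_of A t)).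
Proof.
  intros HL HA. unfold normA, tail_term.
  destruct (excluded_middle_informative (finite_set A)) as [Hf|Hf];
    [|exfalso; apply Hf; now exists t].
  destruct (constructive_indefinite_description _ Hf) as [t' HA']. cbn [proj1_sig].
  rewrite (Series_shift_lim x L) by exact HL.
  rewrite (Series_eventually_zero _ t') by (intros n Hn; now rewrite HA').
  fold (block_term x A). rewrite <- cut_sqsum_tail_cuts_of.
  rewrite <- (cuts_of_stable A t' (Nat.max t t')), (cuts_of_stable A t (Nat.max t t'))
    by (auto; lia).
  reflexivity.
Qed.

Lemma normA_infinite x A : ~ finite_set A -> normA x A = sqrt (Series (block_term x A)).
Proof.
  intros Hinf. unfold normA, tail_term.
  destruct (excluded_middle_informative (finite_set A)); [contradiction|]. now rewrite Rplus_0_r.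
Qed.

Lemma locate_block A n :
  (exists m, (n <= m)%nat /\ A m = true /\ (block_start A m <= n)%nat) \/
  (forall m, (n <= m)%nat -> A m = false).
Proof.
  destruct (classic (exists m, (n <= m)%nat /\ A m = true)) as [[m0 Hm0]|Hno].
  - left. destruct (least_witness (fun m => (n <= m)%nat /\ A m = true) m0 Hm0)
      as [k [[Hnk HAk] Hmin]].
    exists k. split; [exact Hnk|]. split; [exact HAk|].
    replace k with (n + (k - n))%nat by lia. apply block_start_no_cut. intros p Hp.
    destruct (A p) eqn:E; [|reflexivity]. exfalso. apply (Hmin p); [lia|]. split; [lia|exact E].
  - right. intros m Hm. destruct (A m) eqn:E; [|reflexivity]. exfalso. apply Hno. eauto.
Qed.

Section ClusterPoint.
Variable beta : nat -> nat -> bool.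

Definition frequent_prefix (p : list bool) : Prop :=
  forall M, exists N, (M <= N)%nat /\ forall i, (i < length p)%nat -> beta N i = nth i p false.

(* König's lemma: a prefix shared by infinitely many [beta N] extends by one digit. *)
Fixpoint cluster_prefix (k : nat) : list bool :=
  match k with
  | O => []
  | S k' => let p := cluster_prefix k' in
      if excluded_middle_informative (frequent_prefix (p ++ [false])) then p ++ [false]
      else p ++ [true]
  end.

Lemma cluster_prefix_length k : length (cluster_prefix k) = k.
Proof.
  induction k as [|k IH]; simpl; [reflexivity|].
  destruct (excluded_middle_informative _); rewrite length_app, IH; simpl; lia.
Qed.

Lemma frequent_prefix_extend p : frequent_prefix p ->
  frequent_prefix (p ++ [false]) \/ frequent_prefix (p ++ [true]).
Proof.
  intros Hp. apply NNPP. intros Hno. apply not_or_and in Hno as [Hf Ht].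
  apply not_all_ex_not in Hf as [M0 HM0]. apply not_all_ex_not in Ht as [M1 HM1].
  destruct (Hp (Nat.max M0 M1)) as [N [HN Hagree]].
  assert (Hsnoc : forall i, (i < length (p ++ [beta N (length p)]))%nat ->
            beta N i = nth i (p ++ [beta N (length p)]) false).
  { intros i Hi. rewrite length_app in Hi. simpl in Hi.
    destruct (Nat.lt_ge_cases i (length p)) as [Hlt|Hge].
    - rewrite app_nth1 by exact Hlt. now apply Hagree.
    - replace i with (length p) by lia. rewrite app_nth2, Nat.sub_diag by lia. reflexivity. }
  destruct (beta N (length p)); [apply HM1|apply HM0]; exists N; split; auto; lia.
Qed.

Lemma cluster_prefix_frequent k : frequent_prefix (cluster_prefix k).
Proof.
  induction k as [|k IH]; simpl.
  - intros M. exists M. split; [lia|]. simpl. lia.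
  - destruct (excluded_middle_informative _) as [Hf|Hf]; [exact Hf|].
    now destruct (frequent_prefix_extend _ IH).
Qed.

Lemma cluster_prefix_nth k d i : (i < k)%nat ->
  nth i (cluster_prefix (k + d)) false = nth i (cluster_prefix k) false.
Proof.
  intros Hi. induction d as [|d IH]; [now rewrite Nat.add_0_r|].
  rewrite Nat.add_succ_r. simpl.
  destruct (excluded_middle_informative _);
    rewrite app_nth1 by (rewrite cluster_prefix_length; lia); exact IH.
Qed.

Definition cluster_point (m : nat) : bool := nth m (cluster_prefix (S m)) false.

Lemma cluster_point_spec k M :
  exists N, (M <= N)%nat /\ forall i, (i < k)%nat -> beta N i = cluster_point i.
Proof.
  destruct (cluster_prefix_frequent k M) as [N [HN Hagree]]. exists N. split; [exact HN|].
  intros i Hi. rewrite Hagree by (rewrite cluster_prefix_length; exact Hi). unfold cluster_point.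
  replace k with (S i + (k - S i))%nat by lia. apply cluster_prefix_nth. lia.
Qed.

End ClusterPoint.

Lemma sq_shift_bound u v (r d : R) : 0 <= r -> 0 <= d -> v ^ 2 + r <= d ^ 2 ->
  Rabs ((u + v) ^ 2 + r - u ^ 2) <= 2 * Rabs u * d + d ^ 2.
Proof.
  intros HR Hd Hv.
  assert (Hvd : Rabs v <= d).
  { rewrite <- (Rabs_pos_eq d Hd). apply Rsqr_le_abs_0. unfold Rsqr. nra. }
  assert (Huv : Rabs (u * v) <= Rabs u * d).
  { rewrite Rabs_mult. apply Rmult_le_compat_l; [apply Rabs_pos|exact Hvd]. }
  pose proof (Rle_abs (u * v)). pose proof (Rle_abs (- (u * v))). rewrite Rabs_Ropp in *.
  apply Rabs_le. split; nra.
Qed.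

(* Moving the start of the first block from [k] to [c] changes the first block sum
   by [u = psum x k - psum x c] and leaves the other blocks untouched. *)
Lemma cut_sqsum_tail_restart x (L : R) c k cs d : increasing_from k cs -> 0 <= d ->
  cut_sqsum_tail x L k cs <= d ^ 2 ->
  Rabs (cut_sqsum_tail x L c cs - (psum x k - psum x c) ^ 2) <=
    2 * Rabs (psum x k - psum x c) * d + d ^ 2.
Proof.
  intros Hi Hd Hk. unfold cut_sqsum_tail in *.
  destruct cs as [|b r]; cbn [cut_sqsum last_cut] in *.
  - replace (0 + (L - psum x c) ^ 2) with ((psum x k - psum x c + (L - psum x k)) ^ 2 + 0)
      by ring.
    apply sq_shift_bound; lra.
  - set (rest := cut_sqsum x b r + (L - psum x (last_cut b r)) ^ 2).
    replace ((psum x b - psum x c) ^ 2 + cut_sqsum x b r + (L - psum x (last_cut b r)) ^ 2)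
      with ((psum x k - psum x c + (psum x b - psum x k)) ^ 2 + rest) by (unfold rest; ring).
    apply sq_shift_bound; [|exact Hd|unfold rest; lra].
    pose proof (cut_sqsum_ge0 x b r). pose proof (pow2_ge_0 (L - psum x (last_cut b r))).
    unfold rest. lra.
Qed.

Section OptimalCutSet.
Variables (x : nat -> R) (NJ : R).
Hypothesis NJ_ge0 : 0 <= NJ.
Hypothesis sqsum_le : forall l, admissible l -> sqsum x l <= NJ ^ 2.

Lemma cut_sqsum_le a cs : increasing_from a cs -> cut_sqsum x a cs <= NJ ^ 2.
Proof.
  intros Hi. pose proof (sqsum_le _ (admissible_cut_family_ray a cs Hi)) as Hle.
  rewrite sqsum_app, sqsum_cut_family, sqsum_cons in Hle by exact Hi. simpl in Hle.
  pose proof (pow2_ge_0 (isum x (last_cut a cs, None))). lra.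
Qed.

Lemma Rabs_psum_sub_le c k : Rabs (psum x k - psum x c) <= NJ.
Proof.
  rewrite <- (Rabs_pos_eq NJ NJ_ge0). apply Rsqr_le_abs_0. unfold Rsqr.
  destruct (Compare_dec.lt_eq_lt_dec c k) as [[Hck|Hck]|Hkc].
  - pose proof (cut_sqsum_le c [k] (conj Hck I)) as Hle. simpl in Hle. nra.
  - subst k. rewrite Rminus_diag. nra.
  - pose proof (cut_sqsum_le k [c] (conj Hkc I)) as Hle. simpl in Hle. nra.
Qed.

(* Otherwise arbitrarily many blocks, each of weight more than [eps], could be
   concatenated, against [cut_sqsum_le]. *)
Lemma cut_sqsum_eventually_small eps : 0 < eps ->
  exists k0, forall k cs, (k0 <= k)%nat -> increasing_from k cs -> cut_sqsum x k cs <= eps.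
Proof.
  intros Heps. apply NNPP. intros Hno.
  assert (Hbig : forall k0, exists k cs,
            (k0 <= k)%nat /\ increasing_from k cs /\ eps < cut_sqsum x k cs).
  { intros k0. apply NNPP. intros Hn. apply Hno. exists k0. intros k cs Hk Hi.
    apply Rnot_lt_le. intros Hlt. apply Hn. eauto. }
  assert (Hmany : forall m, exists cs, increasing_from 0 cs /\ INR m * eps <= cut_sqsum x 0 cs).
  { induction m as [|m [cs [Hi Hcs]]]; [exists []; simpl; lra|].
    destruct (Hbig (S (last_cut 0 cs))) as [k [cs' [Hk [Hi' Hcs']]]].
    exists (cs ++ k :: cs'). split.
    - apply increasing_from_app. split; [exact Hi|]. simpl. split; [lia|exact Hi'].
    - rewrite cut_sqsum_app, S_INR. simpl.
      pose proof (pow2_ge_0 (psum x k - psum x (last_cut 0 cs))). lra. }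
  destruct (INR_archimed eps (NJ ^ 2) Heps) as [m Hm].
  destruct (Hmany m) as [cs [Hi Hcs]]. pose proof (cut_sqsum_le 0 cs Hi). lra.
Qed.

Lemma psum_converges : exists L : R, is_lim_seq (psum x) L.
Proof.
  assert (Hcauchy : ex_lim_seq_cauchy (psum x)).
  { intros [eps Heps]. simpl.
    destruct (cut_sqsum_eventually_small (eps ^ 2 / 2)) as [k0 Hk0]; [nra|].
    assert (Hpq : forall p q, (k0 <= p < q)%nat -> Rabs (psum x q - psum x p) < eps).
    { intros p q Hpq. specialize (Hk0 p [q] ltac:(lia) ltac:(simpl; split; [lia|exact I])).
      simpl in Hk0. apply Rabs_def1; nra. }
    exists k0. intros n m Hn Hm.
    destruct (Compare_dec.lt_eq_lt_dec n m) as [[Hnm|Hnm]|Hmn]; [| subst m |].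
    - rewrite Rabs_minus_sym. apply Hpq. lia.
    - rewrite Rminus_diag, Rabs_R0. exact Heps.
    - apply Hpq. lia. }
  apply ex_lim_seq_cauchy_corr in Hcauchy. destruct Hcauchy as [L HL]. now exists L.
Qed.

Variable L : R.
Hypothesis psum_lim : is_lim_seq (psum x) L.

Lemma cut_sqsum_tail_le a cs : increasing_from a cs -> cut_sqsum_tail x L a cs <= NJ ^ 2.
Proof.
  intros Hi. pose proof (sqsum_le _ (admissible_cut_family_ray a cs Hi)) as Hle.
  rewrite sqsum_app, sqsum_cut_family, sqsum_cons, (isum_ray x L) in Hle by assumption.
  simpl in Hle. unfold cut_sqsum_tail. lra.
Qed.

Lemma cut_sqsum_tail_eventually_small eps : 0 < eps ->
  exists k0, forall k cs, (k0 <= k)%nat -> increasing_from k cs -> cut_sqsum_tail x L k cs <= eps.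
Proof.
  intros Heps.
  destruct (cut_sqsum_eventually_small (eps / 2)) as [k1 Hk1]; [lra|].
  destruct (lim_sq_dist_small _ _ (eps / 2) psum_lim) as [k2 Hk2]; [lra|].
  exists (Nat.max k1 k2). intros k cs Hk Hi. unfold cut_sqsum_tail.
  pose proof (Hk1 k cs ltac:(lia) Hi). pose proof (last_cut_ge k cs Hi).
  pose proof (Hk2 (last_cut k cs) ltac:(lia)). lra.
Qed.

(* The value of a cut list depends continuously on it, in the product topology:
   blocks beyond a late cut [k] only contribute a small tail. *)
Lemma cut_sqsum_tail_prefix_close eps : 0 < eps -> exists k, forall c1 c2 c2',
  increasing_from 0 c1 -> (last_cut 0 c1 <= k)%nat ->
  increasing_from k c2 -> increasing_from k c2' ->
  cut_sqsum_tail x L 0 (c1 ++ c2) <= cut_sqsum_tail x L 0 (c1 ++ c2') + eps.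
Proof.
  intros Heps.
  set (d := Rmin 1 (eps / (4 * NJ + 2))).
  assert (Hd : 0 < d) by (apply Rmin_glb_lt; [lra|apply Rdiv_lt_0_compat; lra]).
  assert (Hd1 : d <= 1) by apply Rmin_l.
  assert (Hd2 : d * (4 * NJ + 2) <= eps).
  { pose proof (Rmin_r 1 (eps / (4 * NJ + 2))). fold d in H.
    apply (Rmult_le_compat_r (4 * NJ + 2)) in H; [|lra].
    unfold Rdiv in H. rewrite Rmult_assoc, Rinv_l in H by lra. lra. }
  destruct (cut_sqsum_tail_eventually_small (d ^ 2)) as [k Hk]; [nra|].
  exists k. intros c1 c2 c2' Hi1 Hl1 Hi2 Hi2'.
  rewrite !cut_sqsum_tail_app. set (c := last_cut 0 c1) in *.
  pose proof (Rabs_psum_sub_le c k) as Hu. set (u := psum x k - psum x c) in *.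
  pose proof (cut_sqsum_tail_restart x L c k c2 d Hi2 (Rlt_le _ _ Hd) (Hk k c2 (le_n k) Hi2)) as H2.
  pose proof (cut_sqsum_tail_restart x L c k c2' d Hi2' (Rlt_le _ _ Hd) (Hk k c2' (le_n k) Hi2'))
    as H2'.
  fold u in H2, H2'. apply Rabs_le_between in H2, H2'. pose proof (Rabs_pos u). nra.
Qed.

Hypothesis sqsum_approx :
  forall eps, 0 < eps -> exists l, admissible l /\ NJ ^ 2 - eps <= sqsum x l.

Definition optimal_cut_set (A : nat -> bool) : Prop :=
  forall eps, 0 < eps -> exists k, forall j, (k <= j)%nat ->
    NJ ^ 2 - eps <= cut_sqsum_tail x L 0 (cuts_of A j).

(* A cluster point, in the Cantor space, of cut sets that are closer and closer to optimal. *)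
Lemma exists_optimal_cut_set : exists A, optimal_cut_set A.
Proof.
  assert (Happ : forall N, exists cs, increasing_from 0 cs /\
            NJ ^ 2 - / INR (S N) <= cut_sqsum_tail x L 0 cs).
  { intros N. destruct (sqsum_approx (/ INR (S N))) as [l [Hl Hle]].
    { apply Rinv_0_lt_compat, lt_0_INR. lia. }
    destruct (admissible_cuts x L l psum_lim Hl) as [cs [Hi Hcs]].
    exists cs. split; [exact Hi|lra]. }
  destruct (ClassicalEpsilon.choice _ Happ) as [cs Hcs].
  set (A := cluster_point (fun N => cut_set (cs N))). exists A. intros eps Heps.
  destruct (cut_sqsum_tail_prefix_close (eps / 2)) as [k Hk]; [lra|].
  destruct (archimed_cor1 (eps / 2)) as [M [HM HM0]]; [lra|].
  destruct (cluster_point_spec (fun N => cut_set (cs N)) k M) as [N [HMN Hagree]]. fold A in Hagree.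
  destruct (Hcs N) as [HiN HN].
  destruct (cuts_of_cut_set (cs N) k HiN) as [c2 [Ecs Hi2]].
  rewrite (cuts_of_ext _ _ k Hagree) in Ecs.
  exists k. intros j Hj.
  destruct (cuts_of_extend A k j Hj) as [c2' [Ej [Hi2' _]]].
  destruct (increasing_cuts_of A k) as [Hik Hlk].
  pose proof (Hk _ _ _ Hik Hlk Hi2 Hi2') as Hclose. rewrite <- Ecs in Hclose. rewrite Ej.
  assert (HNM : / INR (S N) <= / INR M).
  { apply Rinv_le_contravar; [apply lt_0_INR; exact HM0|apply le_INR; lia]. }
  lra.
Qed.

Lemma optimal_finite A t : optimal_cut_set A -> (forall n, (t <= n)%nat -> A n = false) ->
  cut_sqsum_tail x L 0 (cuts_of A t) = NJ ^ 2.
Proof.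
  intros Hopt HA. apply Rle_antisym; [apply cut_sqsum_tail_le, increasing_cuts_of|].
  apply Rle_plus_epsilon. intros eps Heps. destruct (Hopt eps Heps) as [k Hk].
  specialize (Hk (Nat.max k t) ltac:(lia)). rewrite (cuts_of_stable A t) in Hk by (auto; lia). lra.
Qed.

Lemma optimal_infinite A : optimal_cut_set A -> ~ finite_set A ->
  is_lim_seq (psum (block_term x A)) (NJ ^ 2).
Proof.
  intros Hopt Hinf.
  assert (Hbound : forall j, psum (block_term x A) j <= NJ ^ 2).
  { intros j. rewrite psum_block_term. apply cut_sqsum_le, increasing_cuts_of. }
  pose proof (is_lim_seq_psum_Series _ _ (block_term_ge0 x A) Hbound) as Hlim.
  replace (NJ ^ 2) with (Series (block_term x A)); [exact Hlim|]. apply Rle_antisym.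
  - exact (is_lim_seq_le _ (fun _ => NJ ^ 2) _ _ Hbound Hlim (is_lim_seq_const _)).
  - apply Rle_plus_epsilon. intros eps Heps.
    destruct (Hopt (eps / 2)) as [k Hk]; [lra|].
    destruct (lim_sq_dist_small _ _ (eps / 2) psum_lim) as [k' Hk']; [lra|].
    destruct (infinite_cuts A Hinf (Nat.max k k')) as [n [Hn HAn]].
    specialize (Hk (S n) ltac:(lia)). rewrite cut_sqsum_tail_cuts_of, block_start_S, HAn in Hk.
    specialize (Hk' (S n) ltac:(lia)).
    pose proof (psum_le_lim _ _ (S n) (block_term_ge0 x A) Hlim). lra.
Qed.

End OptimalCutSet.

(** * Norming partitions *)

Definition support_hull (x : nat -> R) (s m : nat) (I : interval) : Prop :=
  exists a b, I = (a, Some b) /\ (s <= a <= b)%nat /\ (b <= m)%nat /\ x a <> 0 /\ x b <> 0 /\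
    (forall n, (s <= n < a)%nat -> x n = 0) /\ (forall n, (b < n <= m)%nat -> x n = 0).

Lemma support_hull_exists x s m : (exists n, (s <= n <= m)%nat /\ x n <> 0) ->
  exists I, support_hull x s m I.
Proof.
  intros [n [Hn Hxn]].
  destruct (least_witness (fun k => (s <= k)%nat /\ x k <> 0) n (conj (proj1 Hn) Hxn))
    as [a [[Hsa Ha] Hamin]].
  destruct (greatest_witness (fun k => (s <= k)%nat /\ x k <> 0) n m (conj (proj1 Hn) Hxn)
    (proj2 Hn)) as [b [Hb [[_ Hxb] Hbmax]]].
  assert (Han : (a <= n)%nat).
  { apply Nat.nlt_ge. intros Hna. apply (Hamin n Hna). split; [lia|exact Hxn]. }
  exists (a, Some b), a, b. repeat split; try assumption; try lia.
  - intros k Hk. apply NNPP. intros Hxk. apply (Hamin k); [lia|]. split; [lia|exact Hxk].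
  - intros k Hk. apply NNPP. intros Hxk. apply (Hbmax k); [lia|]. split; [lia|exact Hxk].
Qed.

Lemma support_hull_isum x s m I : support_hull x s m I -> isum x I = psum x (S m) - psum x s.
Proof.
  intros [a [b [-> [Hab [Hbm [_ [_ [Hs Hm]]]]]]]]. rewrite isum_closed by lia.
  rewrite (psum_const_on x (S b) (S m)), (psum_const_on x s a); try lia; [reflexivity| |];
    intros n Hn; [apply Hs|apply Hm]; lia.
Qed.

Lemma support_hull_inner x s m I : support_hull x s m I -> interval_wf I /\ inner_cond x I.
Proof.
  intros [a [b [-> [Hab [_ [Ha [Hb _]]]]]]].
  unfold interval_wf, inner_cond. simpl. split; [lia|auto].
Qed.

Definition meets_support (x : nat -> R) (A : nat -> bool) (m : nat) : Prop :=
  A m = true /\ exists n, (block_start A m <= n <= m)%nat /\ x n <> 0.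

Definition block_hull (x : nat -> R) (A : nat -> bool) (m : nat) : interval :=
  epsilon (inhabits default_interval) (support_hull x (block_start A m) m).

Lemma block_hull_spec x A m : meets_support x A m ->
  support_hull x (block_start A m) m (block_hull x A m).
Proof. intros [_ Hsupp]. unfold block_hull. apply epsilon_spec, support_hull_exists, Hsupp. Qed.

Lemma block_term_meets_support x A m : meets_support x A m ->
  block_term x A m = isum x (block_hull x A m) ^ 2.
Proof.
  intros Hmeet. unfold block_term. destruct Hmeet as [HA Hsupp]. rewrite HA, blockA_psum.
  now rewrite (support_hull_isum x (block_start A m) m) by (apply block_hull_spec; now split).
Qed.

Lemma block_term_off_support x A m : ~ meets_support x A m -> block_term x A m = 0.
Proof.
  intros Hmeet. unfold block_term. destruct (A m) eqn:HA; [|reflexivity].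
  rewrite blockA_psum, (psum_const_on x (block_start A m) (S m)); [lra| |].
  - pose proof (block_start_le A m). lia.
  - intros n Hn. apply NNPP. intros Hxn. apply Hmeet. split; [exact HA|].
    exists n. split; [lia|exact Hxn].
Qed.

Fixpoint support_hulls (x : nat -> R) (A : nat -> bool) (t : nat) : list interval :=
  match t with
  | O => []
  | S t' => support_hulls x A t' ++
      (if excluded_middle_informative (meets_support x A t') then [block_hull x A t'] else [])
  end.

Lemma support_hulls_In x A t I : In I (support_hulls x A t) ->
  exists m, (m < t)%nat /\ meets_support x A m /\ I = block_hull x A m.
Proof.
  induction t as [|t IH]; simpl; [tauto|]. intros HI. apply in_app_iff in HI as [HI|HI].
  - destruct (IH HI) as [m [Hm Hmeet]]. exists m. split; [lia|exact Hmeet].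
  - destruct (excluded_middle_informative _) as [Hmeet|Hmeet]; [|destruct HI].
    destruct HI as [<-|[]]. exists t. auto.
Qed.

Lemma support_hulls_inner x A t : List.Forall (inner_cond x) (support_hulls x A t).
Proof.
  apply Forall_forall. intros I HI. destruct (support_hulls_In x A t I HI) as [m [_ [Hmeet ->]]].
  exact (proj2 (support_hull_inner _ _ _ _ (block_hull_spec x A m Hmeet))).
Qed.

Lemma support_hulls_before x A t J : (block_start A t <= fst J)%nat ->
  List.Forall (fun I => ordered_pair I J) (support_hulls x A t).
Proof.
  intros HJ. apply Forall_forall. intros I HI.
  destruct (support_hulls_In x A t I HI) as [m [Hm [Hmeet ->]]].
  destruct (block_hull_spec x A m Hmeet) as [a [b [-> [Hab [Hbm _]]]]].
  pose proof (block_start_after_cut A m t (proj1 Hmeet) Hm). unfold ordered_pair. simpl. lia.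
Qed.

Lemma chain_support_hulls x A t : chain (support_hulls x A t).
Proof.
  induction t as [|t IH]; simpl; [exact I|].
  destruct (excluded_middle_informative _) as [Hmeet|Hmeet]; [|now rewrite app_nil_r].
  pose proof (block_hull_spec x A t Hmeet) as Hh.
  apply chain_app_last; [exact IH|exact (proj1 (support_hull_inner _ _ _ _ Hh))|].
  apply support_hulls_before. destruct Hh as [a [b [-> [Hab _]]]]. simpl. lia.
Qed.

Lemma sqsum_support_hulls x A t : sqsum x (support_hulls x A t) = psum (block_term x A) t.
Proof.
  induction t as [|t IH]; [reflexivity|]. simpl. rewrite sqsum_app, IH.
  destruct (excluded_middle_informative _) as [Hmeet|Hmeet].
  - rewrite (block_term_meets_support x A t Hmeet). simpl. lra.
  - rewrite (block_term_off_support x A t Hmeet). simpl. lra.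
Qed.

Lemma support_hulls_last x A m t : meets_support x A m -> (m < t)%nat ->
  (forall j, (m < j < t)%nat -> ~ meets_support x A j) ->
  support_hulls x A t = support_hulls x A m ++ [block_hull x A m].
Proof.
  intros Hmeet Hmt Hgap. induction Hmt as [|t Hmt IH]; simpl.
  - destruct (excluded_middle_informative _); [reflexivity|contradiction].
  - destruct (excluded_middle_informative _) as [Hmeet_t|Hmeet_t];
      [exfalso; apply (Hgap t); auto; lia|].
    rewrite app_nil_r. apply IH. intros j Hj. apply Hgap. lia.
Qed.

Section NormingPartition.
Variables (x : nat -> R) (NJ : R).
Hypothesis normJ_x : normJ x = Finite NJ.
Hypothesis NJ_ge0 : 0 <= NJ.

Lemma finite_norming_partition l J : chain (l ++ [J]) -> List.Forall (inner_cond x) l ->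
  last_cond x J -> sqsum x (l ++ [J]) = NJ ^ 2 -> x_norming_partition x (FinF (l ++ [J])).
Proof.
  intros Hc Hin HJ Hs. rewrite Forall_forall in Hin. split; [split|].
  - simpl. split; [apply not_eq_sym, app_cons_not_nil|]. split; [now apply chain_wf|].
    intros i Hi. apply chain_nth; [exact Hc|lia].
  - simpl. now rewrite normJ_x, Hs, sqrt_pow2.
  - rewrite length_app. simpl. split.
    + intros i Hi. rewrite app_nth1 by lia. apply Hin, nth_In. lia.
    + now rewrite Nat.add_sub, app_nth2, Nat.sub_diag by lia.
Qed.

Lemma norming_partition_of_covering_blocks A t :
  (exists n, x n <> 0) ->
  (forall n, x n <> 0 ->
     exists m, (m < t)%nat /\ meets_support x A m /\ (block_start A m <= n <= m)%nat) ->
  psum (block_term x A) t = NJ ^ 2 -> exists F, x_norming_partition x F.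
Proof.
  intros [n0 Hn0] Hcov Hsum.
  destruct (Hcov n0 Hn0) as [m0 [Hm0 [Hmeet_m0 _]]].
  destruct (greatest_witness (meets_support x A) m0 (t - 1) Hmeet_m0 ltac:(lia))
    as [ms [Hms [Hmeet_ms Hmax]]].
  assert (Ehulls : support_hulls x A t = support_hulls x A ms ++ [block_hull x A ms]).
  { apply support_hulls_last; [exact Hmeet_ms|lia|]. intros j Hj. apply Hmax. lia. }
  exists (FinF (support_hulls x A ms ++ [block_hull x A ms])).
  apply finite_norming_partition.
  - rewrite <- Ehulls. apply chain_support_hulls.
  - apply support_hulls_inner.
  - destruct (block_hull_spec x A ms Hmeet_ms) as [a [b [-> [Hab [Hbm [Ha [Hb [_ Hzero]]]]]]]].
    unfold last_cond. simpl. split; [exact Ha|]. split; [exact Hb|].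
    intros n Hn. destruct (Hcov n Hn) as [m [Hm [Hmeet Hbl]]].
    destruct (Compare_dec.lt_eq_lt_dec m ms) as [[Hlt|Heq]|Hgt].
    + pose proof (block_start_after_cut A m ms (proj1 Hmeet) Hlt). lia.
    + subst m. apply Nat.nlt_ge. intros Hbn. apply Hn, Hzero. lia.
    + exfalso. apply (Hmax m); [lia|exact Hmeet].
  - now rewrite <- Ehulls, sqsum_support_hulls.
Qed.

Lemma tail_support_hull (L : R) c : is_lim_seq (psum x) L ->
  (exists n, (c <= n)%nat /\ x n <> 0) ->
  exists J, interval_wf J /\ (c <= fst J)%nat /\ last_cond x J /\ isum x J = L - psum x c.
Proof.
  intros HL [n0 [Hn0 Hx0]].
  destruct (least_witness (fun n => (c <= n)%nat /\ x n <> 0) n0 (conj Hn0 Hx0))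
    as [a [[Hca Ha] Hamin]].
  assert (Hpa : psum x a = psum x c).
  { apply psum_const_on; [exact Hca|]. intros n Hn. apply NNPP. intros Hxn.
    apply (Hamin n); [lia|]. split; [lia|exact Hxn]. }
  destruct (classic (forall N, exists n, (N <= n)%nat /\ x n <> 0)) as [Hinf|Hfin].
  - exists (a, None). unfold interval_wf, last_cond. simpl. repeat split; auto.
    now rewrite (isum_ray x L a HL), Hpa.
  - apply not_all_ex_not in Hfin as [N HN].
    assert (HzN : forall n, (N <= n)%nat -> x n = 0).
    { intros n Hn. apply NNPP. intros Hxn. apply HN. eauto. }
    assert (HaN : (a <= N)%nat) by (apply Nat.nlt_ge; intros HNa; apply Ha, HzN; lia).
    destruct (greatest_witness (fun n => x n <> 0) a N Ha HaN) as [b [Hab [Hb Hbmax]]].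
    assert (Hzb : forall n, (b < n)%nat -> x n = 0).
    { intros n Hn. destruct (Nat.le_gt_cases n N); [|apply HzN; lia].
      apply NNPP. intros Hxn. apply (Hbmax n); [lia|exact Hxn]. }
    assert (HLb : L = psum x (S b)).
    { apply (lim_eventually_const _ _ _ (S b) HL). intros n Hn.
      apply psum_const_on; [exact Hn|]. intros k Hk. apply Hzb. lia. }
    exists (a, Some b). unfold interval_wf, last_cond. simpl. repeat split; try lia; auto.
    + intros n Hn. apply Nat.nlt_ge. intros Hbn. exact (Hn (Hzb n Hbn)).
    + rewrite isum_closed, Hpa, HLb by lia. reflexivity.
Qed.

Lemma norming_partition_of_tail A (L : R) t :
  is_lim_seq (psum x) L -> (exists n, (block_start A t <= n)%nat /\ x n <> 0) ->
  cut_sqsum_tail x L 0 (cuts_of A t) = NJ ^ 2 -> exists F, x_norming_partition x F.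
Proof.
  intros HL Htail Hval.
  destruct (tail_support_hull L (block_start A t) HL Htail) as [J [HJw [HJc [HJl HJs]]]].
  exists (FinF (support_hulls x A t ++ [J])).
  apply finite_norming_partition; [| |exact HJl|].
  - apply chain_app_last; [apply chain_support_hulls|exact HJw|now apply support_hulls_before].
  - apply support_hulls_inner.
  - rewrite cut_sqsum_tail_cuts_of in Hval.
    rewrite sqsum_app, sqsum_support_hulls, sqsum_cons, HJs. simpl. lra.
Qed.

Lemma norming_partition_of_infinitely_many_blocks A :
  (forall t, exists m, (t <= m)%nat /\ meets_support x A m) ->
  is_lim_seq (psum (block_term x A)) (NJ ^ 2) -> exists F, x_norming_partition x F.
Proof.
  intros Hinf Hlim.
  destruct (enumerate_infinite _ Hinf) as [e [Hmeet [He [H0 HS]]]].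
  assert (Hge : forall i, (i <= e i)%nat) by (induction i; [lia|specialize (He i); lia]).
  assert (Hh : forall i, support_hull x (block_start A (e i)) (e i) (block_hull x A (e i)))
    by (intros i; apply block_hull_spec, Hmeet).
  assert (Hsum : is_lim_seq (psum (fun i => isum x (block_hull x A (e i)) ^ 2)) (NJ ^ 2)).
  { apply is_lim_seq_incr_1.
    apply is_lim_seq_ext with (u := fun i => psum (block_term x A) (S (e i))).
    - intros i. rewrite (psum_enumeration _ e He).
      + apply psum_ext. intros j. apply block_term_meets_support, Hmeet.
      + intros j Hj. apply block_term_off_support, H0, Hj.
      + intros k j Hj. apply block_term_off_support, (HS k j Hj).
    - apply (is_lim_seq_subseq _ _ (fun i => S (e i))); [|exact Hlim].
      intros P [N HP]. exists N. intros n Hn. apply HP. specialize (Hge n). lia. }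
  exists (InfF (fun i => block_hull x A (e i))). split; [split|].
  - split; [intros i; exact (proj1 (support_hull_inner _ _ _ _ (Hh i)))|].
    intros i. destruct (Hh i) as [a [b [-> [_ [Hb _]]]]].
    destruct (Hh (S i)) as [a' [b' [-> [Ha' _]]]]. unfold ordered_pair. simpl.
    pose proof (block_start_after_cut A (e i) (e (S i)) (proj1 (Hmeet i)) (He i)). lia.
  - unfold family_norm. now rewrite normJ_x, (Series_psum_lim _ _ Hsum), sqrt_pow2.
  - intros i. exact (proj2 (support_hull_inner _ _ _ _ (Hh i))).
Qed.

Lemma norming_partition_of_finite_cut_set A (L : R) t :
  is_lim_seq (psum x) L -> (exists n, x n <> 0) -> (forall n, (t <= n)%nat -> A n = false) ->
  cut_sqsum_tail x L 0 (cuts_of A t) = NJ ^ 2 -> exists F, x_norming_partition x F.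
Proof.
  intros HL Hnz HA Hval.
  destruct (classic (exists n, (block_start A t <= n)%nat /\ x n <> 0)) as [Htail|Hnotail].
  { exact (norming_partition_of_tail A L t HL Htail Hval). }
  assert (Hbefore : forall n, x n <> 0 -> (n < block_start A t)%nat).
  { intros n Hn. apply Nat.nle_gt. intros Hle. apply Hnotail. eauto. }
  apply (norming_partition_of_covering_blocks A t Hnz).
  - intros n Hn. pose proof (Hbefore n Hn) as Hnt. pose proof (block_start_le A t).
    destruct (locate_block A n) as [[m [Hnm [HAm Hbs]]]|Hfree].
    + exists m. split; [apply Nat.nle_gt; intros Htm; rewrite HA in HAm; easy|].
      split; [split; [exact HAm|exists n; split; [lia|exact Hn]]|lia].
    + replace t with (n + (t - n))%nat in Hnt by lia.
      pose proof (block_start_no_cut A n (t - n) (fun p Hp => Hfree p (proj1 Hp))). lia.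
  - assert (HLc : L = psum x (block_start A t)).
    { apply (lim_eventually_const _ _ _ (block_start A t) HL). intros n Hn.
      apply psum_const_on; [exact Hn|]. intros k Hk. apply NNPP. intros Hxk.
      specialize (Hbefore k Hxk). lia. }
    rewrite cut_sqsum_tail_cuts_of, <- HLc, Rminus_diag in Hval. simpl in Hval. lra.
Qed.

Lemma norming_partition_of_infinite_cut_set A :
  (exists n, x n <> 0) -> ~ finite_set A -> is_lim_seq (psum (block_term x A)) (NJ ^ 2) ->
  exists F, x_norming_partition x F.
Proof.
  intros Hnz HA Hlim.
  destruct (classic (forall t, exists m, (t <= m)%nat /\ meets_support x A m)) as [Hinf|Hfin].
  { exact (norming_partition_of_infinitely_many_blocks A Hinf Hlim). }
  apply not_all_ex_not in Hfin as [t Ht].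
  assert (Hbeyond : forall m, (t <= m)%nat -> ~ meets_support x A m)
    by (intros m Hm Hmeet; apply Ht; eauto).
  apply (norming_partition_of_covering_blocks A t Hnz).
  - intros n Hn. destruct (locate_block A n) as [[m [Hnm [HAm Hbs]]]|Hfree].
    + assert (Hmeet : meets_support x A m) by (split; [exact HAm|exists n; split; [lia|exact Hn]]).
      exists m. split; [apply Nat.nle_gt; intros Htm; exact (Hbeyond m Htm Hmeet)|].
      split; [exact Hmeet|lia].
    + exfalso. apply HA. now exists n.
  - symmetry. apply (lim_eventually_const _ _ _ t Hlim). intros j Hj.
    apply psum_const_on; [exact Hj|]. intros m Hm. apply block_term_off_support, Hbeyond. lia.
Qed.

End NormingPartition.

Theorem corollary3p3 (x : nat -> R) :
  inJ x -> (exists n, x n <> 0) ->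
  (exists A : nat -> bool, Finite (normA x A) = normJ x) /\
  (exists F : ifamily, x_norming_partition x F).
Proof.
  intros HJ Hnz.
  destruct (normJ_spec x HJ) as [NJ [HN [HNJ [Hle Happrox]]]].
  destruct (psum_converges x NJ Hle) as [L HL].
  destruct (exists_optimal_cut_set x NJ HNJ Hle L HL Happrox) as [A HA].
  destruct (classic (finite_set A)) as [[t Ht]|Hinf].
  - pose proof (optimal_finite x NJ Hle L HL A t HA Ht) as Hval.
    split; [exists A|exact (norming_partition_of_finite_cut_set x NJ HN HNJ A L t HL Hnz Ht Hval)].
    now rewrite (normA_finite x L A t HL Ht), Hval, sqrt_pow2, HN.
  - pose proof (optimal_infinite x NJ Hle L HL A HA Hinf) as Hlim.
    split; [exists A|exact (norming_partition_of_infinite_cut_set x NJ HN HNJ A Hnz Hinf Hlim)].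
    now rewrite (normA_infinite x A Hinf), (Series_psum_lim _ _ Hlim), sqrt_pow2, HN.
Qed.
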